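(* Let $k\ge 2$ and let $G$ be a $k$-regular bipartite graph. Then $\chi_{ei}(G)=2$.
   Context: All graphs are finite and simple. A path $P_4$ in $G$ is a sequence $uxyv$ of four distinct vertices with $ux,xy,yv\in E(G)$; $u,v$ are its end vertices. An $e$-injective $k$-coloring of $G$ is a function $f:V(G)\to\{1,\dots,k\}$ with $f(u)\ne f(v)$ whenever $u,v$ are the end vertices of some path $P_4$ in $G$; $\chi_{ei}(G)$ is the least such $k$. *)

From mathcomp Require Import all_boot.
Set Implicit Arguments. Unset Strict Implicit. Unset Printing Implicit Defensive.

Definition simple_graph (T : finType) (e : rel T) : Prop :=
  symmetric e /\ irreflexive e.

Definition P4_ends (T : finType) (e : rel T) (u v : T) : bool :=
  [exists x : T, exists y : T,
     [&& e u x, e x y, e y v & uniq [:: u; x; y; v]]].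

Definition e_injective_coloring (T : finType) (e : rel T) (k : nat)
  (f : T -> 'I_k) : Prop :=
  forall u v, P4_ends e u v -> f u != f v.

Definition has_ei_coloring (T : finType) (e : rel T) (k : nat) : bool :=
  [exists f : {ffun T -> 'I_k},
     [forall u, forall v, P4_ends e u v ==> (f u != f v)]].

Lemma has_ei_coloringP (T : finType) (e : rel T) (k : nat) :
  reflect (exists f : T -> 'I_k, e_injective_coloring e f)
          (has_ei_coloring e k).
Proof.
apply: (iffP existsP) => [[f /forallP Hf]|[f Hf]].
  exists f => u v Huv; by move: (Hf u) => /forallP /(_ v) /implyP; apply.
exists [ffun x => f x]; apply/forallP => u; apply/forallP => v.
by apply/implyP => /Hf; rewrite !ffunE.
Qed.

Lemma has_ei_coloring_card (T : finType) (e : rel T) :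
  exists k, has_ei_coloring e k.
Proof.
exists #|T|; apply/has_ei_coloringP; exists (@enum_rank T) => u v.
rewrite /P4_ends => /existsP [x /existsP [y /and4P [_ _ _ Hu]]].
apply/negP => /eqP /enum_rank_inj Euv; move: Hu; rewrite Euv /=.
by rewrite !inE eqxx !orbT.
Qed.

Definition chi_ei (T : finType) (e : rel T) : nat :=
  ex_minn (has_ei_coloring_card e).

Definition regular (T : finType) (e : rel T) (k : nat) : Prop :=
  forall v : T, #|[set w | e v w]| = k.

Definition bipartite (T : finType) (e : rel T) : Prop :=
  exists A : {set T}, forall u v, e u v -> (u \in A) != (v \in A).

From mathcomp Require Import all_boot.

Set Implicit Arguments.
Unset Strict Implicit.
Unset Printing Implicit Defensive.

(* A bipartition 2-colours every P4 properly, since the ends of a path with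
   three edges lie on opposite sides; and in a triangle-free graph of minimum
   degree 2 a P4 exists, so a single colour never suffices. *)

Lemma chi_ei_eq (T : finType) (e : rel T) (n : nat) :
  has_ei_coloring e n -> (forall m, has_ei_coloring e m -> n <= m) ->
  chi_ei e = n.
Proof.
move=> en n_min; rewrite /chi_ei; case: ex_minnP => m em m_min.
by apply/eqP; rewrite eqn_leq m_min // n_min.
Qed.

Lemma has_ei_coloring_gt1 (T : finType) (e : rel T) (u v : T) (n : nat) :
  P4_ends e u v -> has_ei_coloring e n -> 1 < n.
Proof.
move=> uPv /has_ei_coloringP[f f_ei]; have := f_ei u v uPv.
case: n f {f_ei} => [|[|//]] f; first by case: (f u).
by rewrite (ord1 (f u)) (ord1 (f v)).
Qed.

Lemma exists_neighbour_neq (T : finType) (e : rel T) (v z : T) :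
  1 < #|[set w | e v w]| -> exists2 w, e v w & w != z.
Proof.
move=> deg_v; have [w w_nz] : exists w, w \in [set w | e v w] :\ z.
  apply/set0Pn; rewrite -card_gt0 -(ltn_add2l (z \in [set w | e v w])) addn0.
  by rewrite -cardsD1 (leq_ltn_trans (leq_b1 _) deg_v).
by move: w_nz; rewrite !inE => /andP[wz vw]; exists w.
Qed.

Lemma exists_P4_ends (T : finType) (e : rel T) (u : T) :
  irreflexive e -> (forall x y z, e x y -> e y z -> ~~ e z x) ->
  (forall v, 1 < #|[set w | e v w]|) -> exists v, P4_ends e u v.
Proof.
move=> e_irr e_tri min_deg.
have [x ux _] := exists_neighbour_neq u (min_deg u).
have [y xy yu] := exists_neighbour_neq u (min_deg x).
have [v yv vx] := exists_neighbour_neq x (min_deg y).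
have edge_neq a b : e a b -> a != b by apply: contraTneq => ->; rewrite e_irr.
have vu : v != u by apply: contraNneq (e_tri _ _ _ ux xy) => <-.
exists v; apply/existsP; exists x; apply/existsP; exists y.
rewrite ux xy yv /= !inE !negb_or (edge_neq _ _ ux) (edge_neq _ _ xy).
by rewrite (edge_neq _ _ yv) eq_sym yu eq_sym vu eq_sym vx.
Qed.

Section Bipartite.

Variables (T : finType) (e : rel T) (A : {set T}).
Hypothesis e_bip : forall u v, e u v -> (u \in A) != (v \in A).

Lemma bipartite_edge u v : e u v -> (v \in A) = ~~ (u \in A).
Proof. by move/e_bip; case: (u \in A); case: (v \in A). Qed.

Lemma bipartite_irreflexive : irreflexive e.
Proof. by move=> u; apply/negP => /e_bip; rewrite eqxx. Qed.

Lemma bipartite_triangle_free x y z : e x y -> e y z -> ~~ e z x.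
Proof.
move=> /bipartite_edge xy /bipartite_edge yz; apply/negP => /bipartite_edge.
by rewrite yz xy; case: (x \in A).
Qed.

Lemma bipartite_P4_ends u v : P4_ends e u v -> (v \in A) = ~~ (u \in A).
Proof.
case/existsP=> x /existsP[y /and4P[/bipartite_edge ux /bipartite_edge xy]].
by move=> /bipartite_edge -> _; rewrite xy ux negbK.
Qed.

Lemma bipartite_has_ei_coloring2 : has_ei_coloring e 2.
Proof.
apply/has_ei_coloringP; exists (fun x => inord (x \in A)) => u v /bipartite_P4_ends.
by move=> ->; case: (u \in A); rewrite -val_eqE /= !inordK.
Qed.

End Bipartite.

Theorem proposition3p6 (T : finType) (e : rel T) (k : nat) :
  simple_graph e -> 0 < #|T| -> 2 <= k -> regular e k -> bipartite e ->
  chi_ei e = 2.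
Proof.
move=> _ /card_gt0P[u _] k_ge2 e_reg [A e_bip].
have min_deg v : 1 < #|[set w | e v w]| by rewrite e_reg.
have [v uPv] := exists_P4_ends u (bipartite_irreflexive e_bip)
  (bipartite_triangle_free e_bip) min_deg.
apply: chi_ei_eq (bipartite_has_ei_coloring2 e_bip) _ => m.
exact: has_ei_coloring_gt1 uPv.
Qed.
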